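(* Let $n\ge0$ and let $f^{n+1}_1,\ldots,f^{n+1}_{n+1}$ be Alpert multiwavelets of multiplicity $n+1$. Let $c$ be the real constant with $f^{n+1}_{n+1}(x)=c\,p_n(x)$ for $x\in(0,1)$. Then for all real $t$, \[ \int_{-1}^1 f^{n+1}_{n+1}(x)e^{ixt}\,dx=2ic\,t^{2n+1}\frac{(-1)^n n!}{(3n+2)!}\,{}_1F_2\!\left(\begin{matrix}n+1\\ \frac{3n+3}2,\,\frac{3n+4}2\end{matrix};-\frac{t^2}4\right). \] If $n\ge1$ and $d$ is the real constant with $f^{n+1}_{n}(x)=d\,q_n(x)$ for $x\in(0,1)$, then for all real $t$, \[ \int_{-1}^1 f^{n+1}_{n}(x)e^{ixt}\,dx=2d\,t^{2n}\frac{(-1)^n n!}{(3n+1)!}\,{}_1F_2\!\left(\begin{matrix}n+1\\ \frac{3n+2}2,\,\frac{3n+3}2\end{matrix};-\frac{t^2}4\right). \]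
   Context: Alpert multiwavelets of multiplicity $N\in\mathbb{N}$: real functions $f^N_1,\ldots,f^N_N$ supported on $[-1,1]$ such that (i) the restriction of each $f^N_i$ to $(0,1)$ is a polynomial of degree at most $N-1$; (ii) $f^N_k(-t)=(-1)^{k+N-1}f^N_k(t)$ for $t\in(0,1)$; (iii) $\int_{-1}^1 f^N_i f^N_j\,dt=\delta_{i,j}$; (iv) $\int_{-1}^1 f^N_k(t)t^i\,dt=0$ for $i=0,\ldots,k+N-2$. (On $(0,1)$, $f^{n+1}_{n+1}$ is a constant multiple of $p_n$ and, for $n\ge1$, $f^{n+1}_n$ is a constant multiple of $q_n$.) Pochhammer symbol: $(a)_0=1$, $(a)_n=a(a+1)\cdots(a+n-1)$; $\binom{n+a}{n}:=\frac{(a+1)_n}{n!}$. $p_n(x)=\sum_{k=0}^n\binom nk\binom{n+\frac k2}{n}(-1)^{n-k}x^k$, $q_n(x)=\sum_{k=0}^n\binom nk\binom{n+\frac{k-1}2}{n}(-1)^{n-k}x^k$. ${}_1F_2(a;b_1,b_2;z)=\sum_{j\ge0}\frac{(a)_j}{(b_1)_j(b_2)_j\,j!}z^j$. *)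

From Stdlib Require Import Reals Factorial.
Open Scope R_scope.

Fixpoint poch (a : R) (n : nat) : R :=
  match n with
  | O => 1
  | S m => poch a m * (a + INR m)
  end.

(* binom(n + a, n) := (a+1)_n / n! *)
Definition binomR (n : nat) (a : R) : R := poch (a + 1) n / INR (fact n).

Definition p_poly (n : nat) (x : R) : R :=
  sum_f_R0 (fun k => Binomial.C n k * binomR n (INR k / 2)
                     * (-1) ^ (n - k) * x ^ k) n.

Definition q_poly (n : nat) (x : R) : R :=
  sum_f_R0 (fun k => Binomial.C n k * binomR n ((INR k - 1) / 2)
                     * (-1) ^ (n - k) * x ^ k) n.

Definition hyp1F2_term (a b1 b2 z : R) (j : nat) : R :=
  poch a j / (poch b1 j * poch b2 j * INR (fact j)) * z ^ j.

Definition hyp1F2_is (a b1 b2 z s : R) : Prop :=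
  infinite_sum (hyp1F2_term a b1 b2 z) s.

Definition Rint (g : R -> R) (a b v : R) : Prop :=
  exists pr : Riemann_integrable g a b, RiemannInt pr = v.

Definition poly_on_01 (g : R -> R) (d : nat) : Prop :=
  exists c : nat -> R, forall x, 0 < x < 1 -> g x = sum_f_R0 (fun i => c i * x ^ i) d.

Definition alpert (N : nat) (f : nat -> R -> R) : Prop :=
  (forall k, (1 <= k <= N)%nat -> forall x, (x < -1 \/ 1 < x) -> f k x = 0) /\
  (forall k, (1 <= k <= N)%nat -> poly_on_01 (f k) (N - 1)) /\
  (forall k, (1 <= k <= N)%nat -> forall t, 0 < t < 1 ->
      f k (- t) = (-1) ^ (k + N - 1) * f k t) /\
  (forall i j, (1 <= i <= N)%nat -> (1 <= j <= N)%nat ->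
      Rint (fun x => f i x * f j x) (-1) 1 (if Nat.eqb i j then 1 else 0)) /\
  (forall k i, (1 <= k <= N)%nat -> (i <= k + N - 2)%nat ->
      Rint (fun x => f k x * x ^ i) (-1) 1 0).

(* On (0,1) the wavelet is c p_n (resp. d q_n), and its parity makes one of the cosine and sine
   integrals over [-1,1] vanish and the other twice the integral over [0,1].  Integrating the
   Taylor series of sin (x t + ph) term by term expresses that integral through the moments
   mu_m = int_0^1 P(x) x^m dx.  Up to a factor, mu_m is the n-th finite difference at 0 of
   k |-> (k/2 + beta)_n / (k/2 + (m+1)/2).  Dividing the numerator by the denominator leaves a
   quotient of degree < n, which the difference kills, and the constant remainder
   (beta - (m+1)/2)_n; hence mu_m = (-1)^n ((s+1-m)/2)_n / (m+1)_(n+1).  So the moments of one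
   parity vanish below 2n, those of the other are ratios of factorials, and the surviving terms
   of the series are exactly those of the 1F2 series. *)

From Coquelicot Require Import Coquelicot.
From Stdlib Require Import Reals Factorial Lia Lra.
Open Scope R_scope.

Lemma binom_n_0 n : Binomial.C n 0 = 1.
Proof. unfold Binomial.C. rewrite Nat.sub_0_r. simpl. field. apply INR_fact_neq_0. Qed.

Lemma binom_n_n n : Binomial.C n n = 1.
Proof. unfold Binomial.C. rewrite Nat.sub_diag. simpl. field. apply INR_fact_neq_0. Qed.

(** * Finite differences *)

Definition fdiff (n : nat) (g : R -> R) : R :=
  sum_f_R0 (fun k => Binomial.C n k * (-1) ^ (n - k) * g (INR k)) n.

Lemma fdiff_S n g : fdiff (S n) g = fdiff n (fun x => g (x + 1) - g x).
Proof.
  unfold fdiff. destruct n as [|m].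
  { simpl. rewrite !binom_n_0, (binom_n_n 1). rewrite Rplus_0_l. ring. }
  set (T := sum_f_R0 (fun i => Binomial.C (S m) (S i) * (-1) ^ (S m - i) * g (INR (S i))) m).
  assert (Hleft :
    sum_f_R0 (fun k => Binomial.C (S (S m)) k * (-1) ^ (S (S m) - k) * g (INR k)) (S (S m))
    = (-1) ^ S (S m) * g 0
      + sum_f_R0 (fun i => Binomial.C (S m) i * (-1) ^ (S m - i) * g (INR (S i))) (S m) + T).
  { rewrite decomp_sum by lia. rewrite binom_n_0. simpl pred.
    rewrite tech5, (tech5 _ m), !binom_n_n, !Nat.sub_diag.
    rewrite (sum_eq _ (fun i => Binomial.C (S m) i * (-1) ^ (S m - i) * g (INR (S i))
                        + Binomial.C (S m) (S i) * (-1) ^ (S m - i) * g (INR (S i))))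
      by (intros i Hi; rewrite <- pascal by lia;
          replace (S (S m) - S i)%nat with (S m - i)%nat by lia; ring).
    rewrite plus_sum. unfold T. simpl. ring. }
  assert (Hright : sum_f_R0 (fun k => Binomial.C (S m) k * (-1) ^ (S m - k) * g (INR k)) (S m)
    = (-1) ^ S m * g 0 - T).
  { rewrite decomp_sum by lia. rewrite binom_n_0, Nat.sub_0_r. simpl pred.
    rewrite (sum_eq _ (fun i => Binomial.C (S m) (S i) * (-1) ^ (S m - i) * g (INR (S i)) * -1))
      by (intros i Hi; replace (S m - i)%nat with (S (S m - S i)) by lia; simpl; ring).
    rewrite <- scal_sum. unfold T. simpl. ring. }
  rewrite Hleft,
    (sum_eq (fun k => Binomial.C (S m) k * (-1) ^ (S m - k) * (g (INR k + 1) - g (INR k)))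
                         (fun k => Binomial.C (S m) k * (-1) ^ (S m - k) * g (INR (S k))
                              - Binomial.C (S m) k * (-1) ^ (S m - k) * g (INR k)))
    by (intros k _; rewrite S_INR; ring).
  rewrite minus_sum, Hright. simpl pow. ring.
Qed.

Lemma fdiff_ext n g h : (forall k, (k <= n)%nat -> g (INR k) = h (INR k)) -> fdiff n g = fdiff n h.
Proof. intros E. unfold fdiff. apply sum_eq. intros k Hk. now rewrite E. Qed.

Lemma fdiffD n g h : fdiff n (fun x => g x + h x) = fdiff n g + fdiff n h.
Proof. unfold fdiff. rewrite <- plus_sum. apply sum_eq. intros; ring. Qed.

Lemma fdiffZ n c g : fdiff n (fun x => c * g x) = c * fdiff n g.
Proof. unfold fdiff. rewrite scal_sum. apply sum_eq. intros; ring. Qed.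

Inductive poly_deg_lt : nat -> (R -> R) -> Prop :=
| poly_deg_lt_zero d : poly_deg_lt d (fun _ => 0)
| poly_deg_lt_const d c : poly_deg_lt (S d) (fun _ => c)
| poly_deg_lt_mul_linear d g a b :
    poly_deg_lt d g -> poly_deg_lt (S d) (fun x => (a * x + b) * g x)
| poly_deg_ltD d g h : poly_deg_lt d g -> poly_deg_lt d h -> poly_deg_lt d (fun x => g x + h x)
| poly_deg_lt_ext d g h : (forall x, g x = h x) -> poly_deg_lt d g -> poly_deg_lt d h.

Lemma poly_deg_lt_O g : poly_deg_lt 0 g -> forall x, g x = 0.
Proof.
  remember 0%nat as d eqn:Ed. induction 1; intros x; try discriminate; auto.
  - rewrite IHpoly_deg_lt1, IHpoly_deg_lt2 by auto. ring.
  - rewrite <- H. auto.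
Qed.

Lemma poly_deg_ltZ d g c : poly_deg_lt d g -> poly_deg_lt d (fun x => c * g x).
Proof.
  induction 1.
  - apply (poly_deg_lt_ext _ (fun _ => 0)); [intros; ring | apply poly_deg_lt_zero].
  - apply poly_deg_lt_const.
  - apply (poly_deg_lt_ext _ (fun x => (a * x + b) * (c * g x))); [intros; ring|].
    now apply poly_deg_lt_mul_linear.
  - apply (poly_deg_lt_ext _ (fun x => c * g x + c * h x)); [intros; ring|].
    now apply poly_deg_ltD.
  - apply (poly_deg_lt_ext _ (fun x => c * g x)); [intros; now rewrite H | easy].
Qed.

Lemma poly_deg_lt_shift d g s : poly_deg_lt d g -> poly_deg_lt d (fun x => g (x + s)).
Proof.
  induction 1.
  - apply poly_deg_lt_zero.
  - apply poly_deg_lt_const.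
  - apply (poly_deg_lt_ext _ (fun x => (a * x + (a * s + b)) * g (x + s))); [intros; ring|].
    now apply poly_deg_lt_mul_linear.
  - now apply poly_deg_ltD.
  - apply (poly_deg_lt_ext _ (fun x => g (x + s))); [intros; now rewrite H | easy].
Qed.

Lemma poly_deg_lt_diff d g :
  poly_deg_lt (S d) g -> poly_deg_lt d (fun x => g (x + 1) - g x).
Proof.
  remember (S d) as d' eqn:Ed. intros Hg. revert d Ed.
  induction Hg; intros d' Ed.
  - apply (poly_deg_lt_ext _ (fun _ => 0)); [intros; ring | apply poly_deg_lt_zero].
  - apply (poly_deg_lt_ext _ (fun _ => 0)); [intros; ring | apply poly_deg_lt_zero].
  - injection Ed as <-. destruct d as [|d].
    + apply (poly_deg_lt_ext _ (fun _ => 0)); [|apply poly_deg_lt_zero].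
      intros x. rewrite !(poly_deg_lt_O _ Hg). ring.
    + apply (poly_deg_lt_ext _ (fun x => (a * x + b) * (g (x + 1) - g x) + a * g (x + 1)));
        [intros; ring|].
      apply poly_deg_ltD.
      * apply poly_deg_lt_mul_linear, IHHg; reflexivity.
      * now apply poly_deg_ltZ, poly_deg_lt_shift.
  - apply (poly_deg_lt_ext _ (fun x => (g (x + 1) - g x) + (h (x + 1) - h x))); [intros; ring|].
    apply poly_deg_ltD; auto.
  - apply (poly_deg_lt_ext _ (fun x => g (x + 1) - g x)); [intros; now rewrite !H | auto].
Qed.

Lemma fdiff_poly_deg_lt n d g : poly_deg_lt d g -> (d <= n)%nat -> fdiff n g = 0.
Proof.
  revert d g. induction n as [|n IH]; intros d g Hg Hd.
  - assert (d = 0%nat) as -> by lia.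
    unfold fdiff. simpl. rewrite (poly_deg_lt_O _ Hg). ring.
  - rewrite fdiff_S. destruct d as [|d].
    + rewrite (fdiff_ext _ _ (fun x => 0 * x)) by (intros; rewrite !(poly_deg_lt_O _ Hg); ring).
      rewrite fdiffZ. ring.
    + apply (IH d); [now apply poly_deg_lt_diff | lia].
Qed.

(** * Pochhammer symbols *)

Lemma poch_S a r : poch a (S r) = poch a r * (a + INR r).
Proof. reflexivity. Qed.

Lemma poch_Sl a r : poch a (S r) = a * poch (a + 1) r.
Proof.
  revert a. induction r as [|r IH]; intros a; [simpl; ring|].
  change (poch a (S (S r))) with (poch a (S r) * (a + INR (S r))).
  rewrite IH, S_INR. simpl. ring.
Qed.

Lemma poch_pos a r : 0 < a -> 0 < poch a r.
Proof.
  intros Ha. induction r as [|r IH]; simpl; [lra|].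
  apply Rmult_lt_0_compat; [exact IH | pose proof (pos_INR r); lra].
Qed.

Lemma poly_deg_lt_poch a b r : poly_deg_lt (S r) (fun x => poch (a * x + b) r).
Proof.
  induction r as [|r IH]; [exact (poly_deg_lt_const 0 1)|].
  apply (poly_deg_lt_ext _ (fun x => (a * x + (b + INR r)) * poch (a * x + b) r));
    [intros; simpl; ring|].
  now apply poly_deg_lt_mul_linear.
Qed.

(* Writing [(a x + b)_(r+1) = (a x + b)_r (a x + c) + (b + r - c) (a x + b)_r], the first
   summand divided by [a x + c] is a polynomial of degree [r < n], which [fdiff n] kills. *)
Lemma fdiff_poch_div n a b c r : (forall k, (k <= n)%nat -> a * INR k + c <> 0) -> (r <= n)%nat ->
  fdiff n (fun x => poch (a * x + b) r / (a * x + c))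
  = poch (b - c) r * fdiff n (fun x => 1 / (a * x + c)).
Proof.
  intros Hc. induction r as [|r IH]; intros Hr; [simpl; ring|].
  rewrite (fdiff_ext _ _ (fun x => poch (a * x + b) r
                           + (b + INR r - c) * (poch (a * x + b) r / (a * x + c))))
    by (intros k Hk; simpl; field; auto).
  rewrite fdiffD, fdiffZ, IH by lia.
  rewrite (fdiff_poly_deg_lt n (S r) _ (poly_deg_lt_poch a b r)) by lia.
  simpl. ring.
Qed.

Lemma fdiff_inv_shift n c : 0 < c ->
  fdiff n (fun x => 1 / (x + c)) = (-1) ^ n * INR (fact n) / poch c (S n).
Proof.
  revert c. induction n as [|n IH]; intros c Hc.
  - unfold fdiff. simpl. rewrite binom_n_0. field. lra.
  - rewrite fdiff_S.
    rewrite (fdiff_ext _ _ (fun x => 1 / (x + (c + 1)) + -1 * (1 / (x + c))))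
      by (intros k _; pose proof (pos_INR k); field; split; lra).
    rewrite fdiffD, fdiffZ, !IH by lra.
    assert (Hc1 : 0 < poch (c + 1) n) by (apply poch_pos; lra).
    assert (Hcn : 0 < c + 1 + INR n) by (pose proof (pos_INR n); lra).
    rewrite (poch_Sl c (S n)), (poch_Sl c n), fact_simpl, mult_INR, S_INR.
    change (poch (c + 1) (S n)) with (poch (c + 1) n * (c + 1 + INR n)).
    simpl pow. field. repeat split; lra.
Qed.

Lemma poch_opp_nat_lt j n : (j < n)%nat -> poch (- INR j) n = 0.
Proof.
  induction n as [|n IH]; intros Hj; [lia|]. simpl.
  destruct (Nat.eq_dec j n) as [->|Hne]; [ring|]. rewrite IH by lia. ring.
Qed.

Lemma poch_opp_nat n l : poch (- INR (n + l)) n * INR (fact l) = (-1) ^ n * INR (fact (n + l)).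
Proof.
  induction n as [|n IH]; [simpl; ring|].
  rewrite poch_Sl.
  replace (- INR (S n + l) + 1) with (- INR (n + l)) by (rewrite !plus_INR, S_INR; ring).
  replace (S n + l)%nat with (S (n + l)) by lia.
  rewrite fact_simpl, mult_INR, Rmult_assoc, IH. simpl pow. ring.
Qed.

Lemma poch_nat_fact c r : poch (INR (S c)) r * INR (fact c) = INR (fact (c + r)).
Proof.
  induction r as [|r IH]; [simpl; rewrite Nat.add_0_r; ring|].
  replace (c + S r)%nat with (S (c + r)) by lia.
  rewrite fact_simpl, mult_INR, <- IH, poch_S, !S_INR, plus_INR. ring.
Qed.

Lemma poch_half_fact c l :
  poch (INR (c + 1) / 2) l * poch (INR (c + 2) / 2) l * 4 ^ l * INR (fact c) = INR (fact (c + 2 * l)).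
Proof.
  induction l as [|l IH]; [simpl; rewrite Nat.add_0_r; ring|].
  replace (c + 2 * S l)%nat with (S (S (c + 2 * l))) by lia.
  rewrite !fact_simpl, !mult_INR, <- IH, !poch_S, !S_INR, !plus_INR, mult_INR. simpl. field.
Qed.

(** * Moments of the half-binomial polynomials *)

Definition poly_eval (a : nat -> R) (n : nat) (x : R) : R := sum_f_R0 (fun k => a k * x ^ k) n.

(* [moment a n m] is the integral of [poly_eval a n x * x ^ m] over [0, 1]. *)
Definition moment (a : nat -> R) (n m : nat) : R := sum_f_R0 (fun k => a k / INR (k + m + 1)) n.

Definition half_binom_coef (n : nat) (s : R) (k : nat) : R :=
  Binomial.C n k * binomR n ((INR k + s) / 2) * (-1) ^ (n - k).

Lemma moment_half_binom_coef n s m :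
  moment (half_binom_coef n s) n m
  = (-1) ^ n * poch ((s + 1 - INR m) / 2) n / poch (INR m + 1) (S n).
Proof.
  pose proof (pos_INR m) as Hm.
  transitivity (/ INR (fact n) * (1 / 2) *
    fdiff n (fun x => poch (1 / 2 * x + (s / 2 + 1)) n / (1 / 2 * x + (INR m + 1) / 2))).
  { unfold moment, fdiff, half_binom_coef, binomR. rewrite !scal_sum. apply sum_eq. intros k _.
    replace ((INR k + s) / 2 + 1) with (1 / 2 * INR k + (s / 2 + 1)) by field.
    rewrite !plus_INR. simpl INR. pose proof (pos_INR k).
    field. split; [apply INR_fact_neq_0 | lra]. }
  rewrite fdiff_poch_div by first [lia | intros k _; pose proof (pos_INR k); lra].
  rewrite (fdiff_ext _ _ (fun x => 2 * (1 / (x + (INR m + 1)))))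
    by (intros k _; pose proof (pos_INR k); field; lra).
  rewrite fdiffZ, fdiff_inv_shift by lra.
  replace (s / 2 + 1 - (INR m + 1) / 2) with ((s + 1 - INR m) / 2) by field.
  pose proof (poch_pos (INR m + 1) (S n) ltac:(lra)).
  field. split; [lra | apply INR_fact_neq_0].
Qed.

Lemma moment_half_binom_coef_vanish n s m j : (s + 1 - INR m) / 2 = - INR j -> (j < n)%nat ->
  moment (half_binom_coef n s) n m = 0.
Proof.
  intros Hj Hjn. rewrite moment_half_binom_coef, Hj, poch_opp_nat_lt by exact Hjn.
  unfold Rdiv. ring.
Qed.

Lemma pow_m1_sqr n : (-1) ^ n * (-1) ^ n = 1.
Proof. rewrite <- Rpow_mult_distr. replace (-1 * -1) with 1 by ring. apply pow1. Qed.

Lemma moment_half_binom_coef_value n s m l : (s + 1 - INR m) / 2 = - INR (n + l) ->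
  moment (half_binom_coef n s) n m =
  INR (fact (n + l)) * INR (fact m) / (INR (fact l) * INR (fact (m + S n))).
Proof.
  intros Hl. rewrite moment_half_binom_coef, Hl.
  pose proof (INR_fact_neq_0 l). pose proof (INR_fact_neq_0 m).
  pose proof (INR_fact_neq_0 (m + S n)).
  assert (Hopp : poch (- INR (n + l)) n = (-1) ^ n * INR (fact (n + l)) / INR (fact l))
    by (rewrite <- poch_opp_nat; field; easy).
  assert (Hnat : poch (INR m + 1) (S n) = INR (fact (m + S n)) / INR (fact m))
    by (rewrite <- poch_nat_fact, S_INR; field; easy).
  rewrite Hopp, Hnat. unfold Rdiv. rewrite <- !Rmult_assoc, pow_m1_sqr.
  field. auto.
Qed.

(** * Taylor expansion of the sine *)

Lemma sin_plus_PI2 x : sin (x + PI / 2) = cos x.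
Proof. rewrite sin_plus, sin_PI2, cos_PI2. ring. Qed.

Lemma sin_plus_even_PI2 a j : sin (a + INR (2 * j) * (PI / 2)) = (-1) ^ j * sin a.
Proof.
  induction j as [|j IH]; [simpl; rewrite Rmult_0_l, Rplus_0_r; ring|].
  replace (a + INR (2 * S j) * (PI / 2)) with (a + INR (2 * j) * (PI / 2) + PI)
    by (replace (2 * S j)%nat with (S (S (2 * j))) by lia; rewrite !S_INR; field).
  rewrite neg_sin, IH. simpl. ring.
Qed.

Lemma sin_plus_odd_PI2 a j : sin (a + INR (2 * j + 1) * (PI / 2)) = (-1) ^ j * cos a.
Proof.
  replace (a + INR (2 * j + 1) * (PI / 2)) with (a + PI / 2 + INR (2 * j) * (PI / 2))
    by (rewrite plus_INR; simpl; ring).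
  now rewrite sin_plus_even_PI2, sin_plus_PI2.
Qed.

Lemma Derive_n_sin_affine s a k z :
  Derive_n (fun z => sin (s * z + a)) k z = s ^ k * sin (s * z + a + INR k * (PI / 2)).
Proof.
  revert z. induction k as [|k IH]; intros z; [simpl; rewrite Rmult_0_l, Rplus_0_r; ring|].
  simpl Derive_n. rewrite (Derive_ext _ _ _ IH).
  apply is_derive_unique. auto_derive; [easy|].
  rewrite S_INR, <- sin_plus_PI2. simpl pow.
  replace (s * z + a + (INR k + 1) * (PI / 2)) with (s * z + a + INR k * (PI / 2) + PI / 2) by ring.
  ring.
Qed.

Lemma ex_derive_n_sin_affine s a k z : ex_derive_n (fun z => sin (s * z + a)) k z.
Proof.
  destruct k as [|k]; [easy|]. simpl.
  apply (ex_derive_ext (fun z => s ^ k * sin (s * z + a + INR k * (PI / 2)))).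
  - intros. symmetry. apply Derive_n_sin_affine.
  - auto_derive. easy.
Qed.

Definition sin_taylor (a : R) (M : nat) (y : R) : R :=
  sum_f_R0 (fun m => y ^ m / INR (fact m) * sin (a + INR m * (PI / 2))) M.

Lemma sin_taylor_error_pos s a M w : 0 < w -> Rabs s = 1 ->
  Rabs (sin (s * w + a) - sin_taylor a M (s * w)) <= w ^ S M / INR (fact (S M)).
Proof.
  intros Hw Hs.
  destruct (Taylor_Lagrange (fun z => sin (s * z + a)) M 0 w Hw) as [z [_ Ez]].
  { intros; apply ex_derive_n_sin_affine. }
  assert (Hpow : forall k, Rabs (s ^ k) = 1) by (intros; now rewrite <- RPow_abs, Hs, pow1).
  assert (Hrem : 0 < w ^ S M / INR (fact (S M)))
    by (apply Rdiv_lt_0_compat; [now apply pow_lt | apply INR_fact_lt_0]).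
  rewrite Ez, !Rminus_0_r, Derive_n_sin_affine.
  unfold sin_taylor.
  rewrite (sum_eq _ (fun m => (s * w) ^ m / INR (fact m) * sin (a + INR m * (PI / 2))))
    by (intros m _; rewrite Derive_n_sin_affine, Rmult_0_r, Rplus_0_l, Rpow_mult_distr; field;
        apply INR_fact_neq_0).
  replace (_ + _ - _)
    with (w ^ S M / INR (fact (S M)) * (s ^ S M * sin (s * z + a + INR (S M) * (PI / 2))))
    by ring.
  rewrite Rabs_mult, Rabs_mult, Hpow, Rabs_right by lra.
  pose proof (Rabs_le _ 1 (SIN_bound (s * z + a + INR (S M) * (PI / 2)))). nra.
Qed.

Lemma sin_taylor_0 a M : sin_taylor a M 0 = sin a.
Proof.
  induction M as [|M IH]; unfold sin_taylor in *.
  - simpl. rewrite Rmult_0_l, Rplus_0_r. field.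
  - rewrite tech5, IH, pow_i by lia. unfold Rdiv. ring.
Qed.

Lemma sin_taylor_error a M y : Rabs (sin (y + a) - sin_taylor a M y) <= Rabs y ^ S M / INR (fact (S M)).
Proof.
  destruct (Rtotal_order y 0) as [Hy|[->|Hy]].
  - rewrite (Rabs_left y) by exact Hy.
    pose proof (sin_taylor_error_pos (-1) a M (- y) ltac:(lra)) as T.
    replace (-1 * - y) with y in T by ring. apply T. rewrite Rabs_left by lra. ring.
  - rewrite sin_taylor_0, Rplus_0_l, Rminus_diag_eq, Rabs_R0 by reflexivity.
    rewrite pow_i by lia. lra.
  - rewrite (Rabs_right y) by lra.
    pose proof (sin_taylor_error_pos 1 a M y Hy Rabs_R1) as T.
    now rewrite Rmult_1_l in T.
Qed.

(** * Term-by-term integration *)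

Lemma is_RInt_sum (F : nat -> R -> R) (v : nat -> R) a b N :
  (forall i, (i <= N)%nat -> is_RInt (F i) a b (v i)) ->
  is_RInt (fun x => sum_f_R0 (fun i => F i x) N) a b (sum_f_R0 v N).
Proof.
  induction N as [|N IH]; intros HF; [apply HF; lia|].
  apply (is_RInt_plus (fun x => sum_f_R0 (fun i => F i x) N) (F (S N))).
  - apply IH. intros; apply HF; lia.
  - apply HF; lia.
Qed.

Lemma is_RInt_pow_01 j : is_RInt (fun x => x ^ j) 0 1 (1 / INR (j + 1)).
Proof.
  assert (Hj : INR (j + 1) <> 0) by (apply not_0_INR; lia).
  replace (1 / INR (j + 1)) with (minus (1 ^ (j + 1) / INR (j + 1)) (0 ^ (j + 1) / INR (j + 1)))
    by (rewrite pow1, pow_i by lia; unfold minus, plus, opp; simpl; field; exact Hj).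
  apply (is_RInt_derive (fun x => x ^ (j + 1) / INR (j + 1))).
  - intros x _. auto_derive; [easy|]. rewrite Nat.add_1_r in *. simpl pred. field. exact Hj.
  - intros x _. apply (ex_derive_continuous (fun x => x ^ j)). auto_derive. easy.
Qed.

Lemma is_RInt_poly_eval_pow a n m : is_RInt (fun x => poly_eval a n x * x ^ m) 0 1 (moment a n m).
Proof.
  apply (is_RInt_ext (fun x => sum_f_R0 (fun k => scal (a k) (x ^ (k + m))) n)).
  { intros x _. unfold poly_eval. rewrite (Rmult_comm _ (x ^ m)), scal_sum.
    apply sum_eq. intros k _. rewrite pow_add. unfold scal. simpl. unfold mult. simpl. ring. }
  apply is_RInt_sum. intros k _.
  replace (a k / INR (k + m + 1)) with (scal (a k) (1 / INR (k + m + 1)))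
    by (unfold scal; simpl; unfold mult; simpl; field; apply not_0_INR; lia).
  apply (is_RInt_scal (fun x => x ^ (k + m))), is_RInt_pow_01.
Qed.

Lemma ex_derive_poly_eval a n x : ex_derive (poly_eval a n) x.
Proof.
  induction n as [|n IH]; unfold poly_eval in *; simpl; [auto_derive; easy|].
  apply (ex_derive_plus (fun x => sum_f_R0 (fun k => a k * x ^ k) n) (fun x => a (S n) * x ^ S n));
    [exact IH | auto_derive; easy].
Qed.

Lemma poly_eval_bound a n x : 0 <= x <= 1 ->
  Rabs (poly_eval a n x) <= sum_f_R0 (fun k => Rabs (a k)) n.
Proof.
  intros Hx. unfold poly_eval. eapply Rle_trans; [apply Rsum_abs|].
  apply sum_Rle. intros k _. rewrite Rabs_mult.
  assert (Rabs (x ^ k) <= 1).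
  { rewrite <- RPow_abs, <- (pow1 k). apply pow_maj_Rabs. rewrite Rabs_Rabsolu. apply Rabs_le. lra. }
  pose proof (Rabs_pos (a k)). pose proof (Rabs_pos (x ^ k)). nra.
Qed.

Lemma infinite_sum_of_bound u I B r :
  (forall M, Rabs (sum_f_R0 u M - I) <= B * (r ^ S M / INR (fact (S M)))) -> infinite_sum u I.
Proof.
  intros Hu eps Heps.
  assert (HB : 0 < Rabs B + 1) by (pose proof (Rabs_pos B); lra).
  destruct (cv_speed_pow_fact r (eps / (Rabs B + 1))) as [N HN].
  { now apply Rdiv_lt_0_compat. }
  exists N. intros M HM. unfold R_dist.
  specialize (HN (S M) ltac:(lia)). unfold R_dist in HN. rewrite Rminus_0_r in HN.
  eapply Rle_lt_trans; [apply Hu|].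
  eapply Rle_lt_trans; [apply Rle_abs|]. rewrite Rabs_mult.
  apply (Rle_lt_trans _ (Rabs B * (eps / (Rabs B + 1)))).
  - apply Rmult_le_compat_l; [apply Rabs_pos | lra].
  - apply (Rmult_lt_reg_r (Rabs B + 1)); [exact HB|].
    replace (Rabs B * (eps / (Rabs B + 1)) * (Rabs B + 1)) with (Rabs B * eps) by (field; lra).
    nra.
Qed.

Definition sin_integral (a : nat -> R) (n : nat) (ph t : R) : R :=
  RInt (fun x => poly_eval a n x * sin (x * t + ph)) 0 1.

Definition sin_moment_term (a : nat -> R) (n : nat) (ph t : R) (m : nat) : R :=
  t ^ m / INR (fact m) * sin (ph + INR m * (PI / 2)) * moment a n m.

Lemma is_RInt_sin_integral a n ph t :
  is_RInt (fun x => poly_eval a n x * sin (x * t + ph)) 0 1 (sin_integral a n ph t).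
Proof.
  apply (RInt_correct (V := R_CompleteNormedModule)), ex_RInt_continuous. intros x _.
  apply (ex_derive_continuous (fun x => poly_eval a n x * sin (x * t + ph))).
  apply ex_derive_mult; [apply ex_derive_poly_eval | auto_derive; easy].
Qed.

Lemma is_RInt_poly_eval_sin_taylor a n ph t M :
  is_RInt (fun x => poly_eval a n x * sin_taylor ph M (x * t)) 0 1
    (sum_f_R0 (sin_moment_term a n ph t) M).
Proof.
  apply (is_RInt_ext (fun x => sum_f_R0 (fun m =>
    scal (t ^ m / INR (fact m) * sin (ph + INR m * (PI / 2))) (poly_eval a n x * x ^ m)) M)).
  { intros x _. unfold sin_taylor. rewrite scal_sum. apply sum_eq. intros m _.
    unfold scal. simpl. unfold mult. simpl. rewrite Rpow_mult_distr. field. apply INR_fact_neq_0. }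
  apply is_RInt_sum. intros m _.
  apply (is_RInt_scal (fun x => poly_eval a n x * x ^ m)), is_RInt_poly_eval_pow.
Qed.

(* Integrate the Taylor expansion of [sin (x t + ph)] term by term; its remainder is
   uniformly [O(|t|^(M+1) / (M+1)!)] on [0, 1]. *)
Lemma infinite_sum_sin_moment a n ph t :
  infinite_sum (sin_moment_term a n ph t) (sin_integral a n ph t).
Proof.
  set (B := sum_f_R0 (fun k => Rabs (a k)) n).
  apply (infinite_sum_of_bound _ _ B (Rabs t)). intros M.
  pose proof (is_RInt_minus _ _ _ _ _ _ (is_RInt_sin_integral a n ph t)
                (is_RInt_poly_eval_sin_taylor a n ph t M)) as HD.
  rewrite Rabs_minus_sym.
  replace (sin_integral a n ph t - _)
    with (RInt (fun x => minus (poly_eval a n x * sin (x * t + ph))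
                               (poly_eval a n x * sin_taylor ph M (x * t))) 0 1)
    by exact (is_RInt_unique _ _ _ _ HD).
  replace (B * (Rabs t ^ S M / INR (fact (S M))))
    with ((1 - 0) * (B * (Rabs t ^ S M / INR (fact (S M))))) by ring.
  apply abs_RInt_le_const; [lra | eexists; exact HD|].
  intros x Hx. change (minus ?u ?v) with (u - v).
  replace (poly_eval a n x * sin (x * t + ph) - poly_eval a n x * sin_taylor ph M (x * t))
    with (poly_eval a n x * (sin (x * t + ph) - sin_taylor ph M (x * t))) by ring.
  rewrite Rabs_mult. apply Rmult_le_compat; try apply Rabs_pos.
  - now apply poly_eval_bound.
  - eapply Rle_trans; [apply sin_taylor_error|].
    apply Rmult_le_compat_r; [left; apply Rinv_0_lt_compat, INR_fact_lt_0|].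
    rewrite Rabs_mult, Rpow_mult_distr.
    assert (Rabs x ^ S M <= 1).
    { rewrite <- (pow1 (S M)). apply pow_maj_Rabs. rewrite Rabs_Rabsolu. apply Rabs_le. lra. }
    pose proof (pow_le (Rabs t) (S M) (Rabs_pos t)). nra.
Qed.

(** * Sparse series *)

Lemma sum_f_R0_sparse u h m0 :
  (forall m, (m < m0)%nat -> u m = 0) -> (forall l, u (m0 + 2 * l + 1)%nat = 0) ->
  (forall l, u (m0 + 2 * l)%nat = h l) ->
  forall l, sum_f_R0 u (m0 + 2 * l) = sum_f_R0 h l.
Proof.
  intros Hlow Hodd Hh l. induction l as [|l IH].
  - pose proof (Hh 0%nat) as Hh0. rewrite Nat.mul_0_r, Nat.add_0_r in *. simpl. rewrite <- Hh0.
    destruct m0 as [|m0]; [easy|].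
    rewrite tech5, (sum_eq _ (fun _ => 0)), sum_cte by (intros; apply Hlow; lia). ring.
  - replace (m0 + 2 * S l)%nat with (S (S (m0 + 2 * l))) by lia.
    rewrite !tech5, IH.
    replace (S (m0 + 2 * l)) with (m0 + 2 * l + 1)%nat by lia.
    replace (S (m0 + 2 * l + 1)) with (m0 + 2 * S l)%nat by lia.
    rewrite Hodd, Hh. ring.
Qed.

Lemma infinite_sum_sparse u h m0 I :
  (forall m, (m < m0)%nat -> u m = 0) -> (forall l, u (m0 + 2 * l + 1)%nat = 0) ->
  (forall l, u (m0 + 2 * l)%nat = h l) -> infinite_sum u I -> infinite_sum h I.
Proof.
  intros Hlow Hodd Hh Hu eps Heps. destruct (Hu eps Heps) as [N HN].
  exists N. intros l Hl. rewrite <- (sum_f_R0_sparse u h m0) by assumption. apply HN. lia.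
Qed.

Lemma infinite_sum_scal k h F : infinite_sum h F -> infinite_sum (fun l => k * h l) (k * F).
Proof.
  intros Hh. apply is_series_Reals.
  exact (is_series_scal_l k h F (proj2 (is_series_Reals h F) Hh)).
Qed.

Lemma infinite_sum_factor k h I : infinite_sum (fun l => k * h l) I ->
  (k = 0 -> exists F, infinite_sum h F) -> exists F, infinite_sum h F /\ I = k * F.
Proof.
  intros HI Hk0.
  assert (Hh : exists F, infinite_sum h F).
  { destruct (Req_dec k 0) as [Hk|Hk]; [now apply Hk0|].
    exists (/ k * I). apply (infinite_sum_scal (/ k)) in HI.
    intros eps Heps. destruct (HI eps Heps) as [N HN]. exists N. intros M HM.
    rewrite (sum_eq _ (fun l => / k * (k * h l))) by (intros; field; exact Hk).
    apply HN, HM. }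
  destruct Hh as [F HF]. exists F. split; [exact HF|].
  exact (uniqueness_sum _ _ _ HI (infinite_sum_scal k h F HF)).
Qed.

Lemma hyp1F2_is_0 a b1 b2 : hyp1F2_is a b1 b2 0 1.
Proof.
  intros eps Heps. exists 0%nat. intros N _.
  replace (sum_f_R0 (hyp1F2_term a b1 b2 0) N) with 1.
  { unfold R_dist. rewrite Rminus_diag_eq, Rabs_R0 by reflexivity. lra. }
  induction N as [|N IH]; unfold hyp1F2_term in *; [simpl; field|].
  rewrite tech5, <- IH, pow_i by lia. unfold Rdiv. ring.
Qed.

Lemma hyp1F2_term_nat a c t l :
  hyp1F2_term (INR (a + 1)) (INR (c + 1) / 2) (INR (c + 2) / 2) (- t ^ 2 / 4) l =
  INR (fact (a + l)) / INR (fact a) * INR (fact c) / INR (fact (c + 2 * l)) / INR (fact l)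
    * ((-1) ^ l * (t ^ 2) ^ l).
Proof.
  unfold hyp1F2_term.
  pose proof (INR_fact_neq_0 a). pose proof (INR_fact_neq_0 c). pose proof (INR_fact_neq_0 l).
  pose proof (INR_fact_neq_0 (c + 2 * l)).
  assert (H4 : 4 ^ l <> 0) by (apply pow_nonzero; lra).
  assert (Hnat : poch (INR (a + 1)) l = INR (fact (a + l)) / INR (fact a))
    by (rewrite Nat.add_1_r, <- poch_nat_fact; field; easy).
  assert (Hhalf : poch (INR (c + 1) / 2) l * poch (INR (c + 2) / 2) l
                  = INR (fact (c + 2 * l)) / (4 ^ l * INR (fact c)))
    by (rewrite <- poch_half_fact; field; easy).
  rewrite Hnat, Hhalf.
  replace (- t ^ 2 / 4) with (-1 * t ^ 2 * / 4) by field.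
  rewrite !Rpow_mult_distr, pow_inv. field. repeat split; easy.
Qed.

(* The surviving terms [m = m0 + 2 l] of the series, with the sign coming from the phase and the
   moment from [moment_half_binom_coef_value]. *)
Lemma sparse_term_hyp1F2 n m0 t l :
  t ^ (m0 + 2 * l) / INR (fact (m0 + 2 * l)) * (-1) ^ (n + l) *
    (INR (fact (n + l)) * INR (fact (m0 + 2 * l)) / (INR (fact l) * INR (fact (m0 + 2 * l + S n))))
  = t ^ m0 * ((-1) ^ n * INR (fact n) / INR (fact (m0 + n + 1))) *
    hyp1F2_term (INR (n + 1)) (INR (m0 + n + 1 + 1) / 2) (INR (m0 + n + 1 + 2) / 2) (- t ^ 2 / 4) l.
Proof.
  rewrite hyp1F2_term_nat.
  replace (m0 + 2 * l + S n)%nat with (m0 + n + 1 + 2 * l)%nat by lia.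
  rewrite pow_add, pow_mult, pow_add.
  pose proof (INR_fact_neq_0 n). pose proof (INR_fact_neq_0 l).
  pose proof (INR_fact_neq_0 (m0 + n + 1)). pose proof (INR_fact_neq_0 (m0 + n + 1 + 2 * l)).
  pose proof (INR_fact_neq_0 (m0 + 2 * l)).
  field. repeat split; easy.
Qed.

Lemma infinite_sum_sin_integral_p n t :
  infinite_sum (fun l => t ^ (2 * n + 1) * ((-1) ^ n * INR (fact n) / INR (fact (3 * n + 2))) *
                  hyp1F2_term (INR (n + 1)) (INR (3 * n + 3) / 2) (INR (3 * n + 4) / 2) (- t ^ 2 / 4) l)
    (sin_integral (half_binom_coef n 0) n 0 t).
Proof.
  apply (infinite_sum_sparse (sin_moment_term (half_binom_coef n 0) n 0 t) _ (2 * n + 1));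
    [| | |apply infinite_sum_sin_moment]; unfold sin_moment_term.
  - intros m Hm. destruct (Nat.Even_or_Odd m) as [[j ->]|[j ->]].
    + rewrite sin_plus_even_PI2, sin_0. ring.
    + rewrite (moment_half_binom_coef_vanish n 0 _ j); [ring | | lia].
      rewrite plus_INR, mult_INR. simpl. field.
  - intros l. replace (2 * n + 1 + 2 * l + 1)%nat with (2 * (n + l + 1))%nat by lia.
    rewrite sin_plus_even_PI2, sin_0. ring.
  - intros l.
    replace (2 * n + 1 + 2 * l)%nat with (2 * (n + l) + 1)%nat at 3 by lia.
    rewrite sin_plus_odd_PI2, cos_0, Rmult_1_r, (moment_half_binom_coef_value n 0 _ l).
    + replace (3 * n + 2)%nat with (2 * n + 1 + n + 1)%nat by lia.
      replace (3 * n + 3)%nat with (2 * n + 1 + n + 1 + 1)%nat by lia.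
      replace (3 * n + 4)%nat with (2 * n + 1 + n + 1 + 2)%nat by lia.
      rewrite <- sparse_term_hyp1F2. reflexivity.
    + rewrite !plus_INR, !mult_INR. simpl. field.
Qed.

Lemma infinite_sum_sin_integral_q n t :
  infinite_sum (fun l => t ^ (2 * n) * ((-1) ^ n * INR (fact n) / INR (fact (3 * n + 1))) *
                  hyp1F2_term (INR (n + 1)) (INR (3 * n + 2) / 2) (INR (3 * n + 3) / 2) (- t ^ 2 / 4) l)
    (sin_integral (half_binom_coef n (-1)) n (PI / 2) t).
Proof.
  apply (infinite_sum_sparse (sin_moment_term (half_binom_coef n (-1)) n (PI / 2) t) _ (2 * n));
    [| | |apply infinite_sum_sin_moment]; unfold sin_moment_term.
  - intros m Hm. destruct (Nat.Even_or_Odd m) as [[j ->]|[j ->]].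
    + rewrite (moment_half_binom_coef_vanish n (-1) _ j); [ring | | lia].
      rewrite mult_INR. simpl. field.
    + rewrite sin_plus_odd_PI2, cos_PI2. ring.
  - intros l. replace (2 * n + 2 * l + 1)%nat with (2 * (n + l) + 1)%nat by lia.
    rewrite sin_plus_odd_PI2, cos_PI2. ring.
  - intros l.
    replace (2 * n + 2 * l)%nat with (2 * (n + l))%nat at 3 by lia.
    rewrite sin_plus_even_PI2, sin_PI2, Rmult_1_r, (moment_half_binom_coef_value n (-1) _ l).
    + replace (3 * n + 1)%nat with (2 * n + n + 1)%nat by lia.
      replace (3 * n + 2)%nat with (2 * n + n + 1 + 1)%nat by lia.
      replace (3 * n + 3)%nat with (2 * n + n + 1 + 2)%nat by lia.
      rewrite <- sparse_term_hyp1F2. reflexivity.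
    + rewrite !plus_INR, !mult_INR. simpl. field.
Qed.

(** * Symmetric integrals *)

Lemma Rint_of_is_RInt g a b v : is_RInt g a b v -> Rint g a b v.
Proof.
  intros Hg. assert (Hex : ex_RInt g a b) by (exists v; exact Hg).
  exists (ex_RInt_Reals_0 _ _ _ Hex). rewrite <- RInt_Reals. now apply is_RInt_unique.
Qed.

Lemma is_RInt_sym g tau J : (forall x, 0 < x < 1 -> g (- x) = tau * g x) ->
  is_RInt g 0 1 J -> is_RInt g (-1) 1 ((tau + 1) * J).
Proof.
  intros Hsym HJ.
  assert (Hneg : is_RInt g (-1) 0 (tau * J)).
  { assert (Hrefl := is_RInt_comp_opp (fun y => scal (- tau) (g y)) (-1) 0 (scal (- tau) (opp J))).
    apply (is_RInt_ext (fun y => opp (scal (- tau) (g (- y))))).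
    - rewrite Rmin_left, Rmax_right by lra. intros x Hx.
      rewrite <- (Ropp_involutive x) at 2. rewrite (Hsym (- x)) by lra.
      unfold opp, scal. simpl. unfold mult. simpl. ring.
    - replace (tau * J) with (scal (- tau) (opp J))
        by (unfold opp, scal; simpl; unfold mult; simpl; ring).
      apply Hrefl. replace (- -1) with 1 by ring. rewrite Ropp_0.
      apply (is_RInt_scal g 1 0 (- tau)), is_RInt_swap, HJ. }
  replace ((tau + 1) * J) with (plus (tau * J) J) by (unfold plus; simpl; ring).
  exact (is_RInt_Chasles _ _ _ _ _ _ Hneg HJ).
Qed.

Lemma is_RInt_mul_sin_integral g c a n ph t :
  (forall x, 0 < x < 1 -> g x = c * poly_eval a n x) ->
  is_RInt (fun x => g x * sin (x * t + ph)) 0 1 (c * sin_integral a n ph t).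
Proof.
  intros Hg. apply (is_RInt_ext (fun x => scal c (poly_eval a n x * sin (x * t + ph)))).
  - rewrite Rmin_left, Rmax_right by lra. intros x Hx. rewrite Hg by exact Hx.
    unfold scal. simpl. unfold mult. simpl. ring.
  - exact (is_RInt_scal _ 0 1 c _ (is_RInt_sin_integral a n ph t)).
Qed.

Lemma hyp1F2_exists_of_scale_0 a b1 b2 t m n c :
  t ^ m * ((-1) ^ n * INR (fact n) / INR (fact c)) = 0 -> exists F, hyp1F2_is a b1 b2 (- t ^ 2 / 4) F.
Proof.
  intros Hk. exists 1.
  destruct (Req_dec t 0) as [->|Ht].
  - replace (- 0 ^ 2 / 4) with 0 by field. apply hyp1F2_is_0.
  - exfalso. revert Hk. apply Rmult_integral_contrapositive_currified; [now apply pow_nonzero|].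
    pose proof (INR_fact_neq_0 n). pose proof (INR_fact_neq_0 c).
    assert ((-1) ^ n <> 0) by (apply pow_nonzero; lra).
    unfold Rdiv. repeat apply Rmult_integral_contrapositive_currified; auto.
    now apply Rinv_neq_0_compat.
Qed.

Lemma p_poly_half_binom n x : p_poly n x = poly_eval (half_binom_coef n 0) n x.
Proof. unfold p_poly, poly_eval, half_binom_coef. apply sum_eq. intros k _. now rewrite Rplus_0_r. Qed.

Lemma q_poly_half_binom n x : q_poly n x = poly_eval (half_binom_coef n (-1)) n x.
Proof.
  unfold q_poly, poly_eval, half_binom_coef. apply sum_eq. intros k _.
  now replace (INR k + -1) with (INR k - 1) by ring.
Qed.

Lemma fourier_p_poly_odd n g c t :
  (forall x, 0 < x < 1 -> g x = c * p_poly n x) -> (forall x, 0 < x < 1 -> g (- x) = - g x) ->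
  Rint (fun x => g x * cos (x * t)) (-1) 1 0 /\
  exists F, hyp1F2_is (INR (n + 1)) (INR (3 * n + 3) / 2) (INR (3 * n + 4) / 2) (- t ^ 2 / 4) F /\
    Rint (fun x => g x * sin (x * t)) (-1) 1
      (2 * c * t ^ (2 * n + 1) * ((-1) ^ n * INR (fact n) / INR (fact (3 * n + 2))) * F).
Proof.
  intros Hg Hodd.
  assert (Hgp : forall x, 0 < x < 1 -> g x = c * poly_eval (half_binom_coef n 0) n x)
    by (intros; rewrite <- p_poly_half_binom; auto).
  split.
  - apply Rint_of_is_RInt.
    replace 0 with ((-1 + 1) * (c * sin_integral (half_binom_coef n 0) n (PI / 2) t)) by ring.
    apply is_RInt_sym.
    + intros x Hx. rewrite Hodd by exact Hx. replace (- x * t) with (- (x * t)) by ring.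
      rewrite cos_neg. ring.
    + apply (is_RInt_ext (fun x => g x * sin (x * t + PI / 2))); [intros; now rewrite sin_plus_PI2|].
      now apply is_RInt_mul_sin_integral.
  - destruct (infinite_sum_factor _ _ _ (infinite_sum_sin_integral_p n t)
                (hyp1F2_exists_of_scale_0 _ _ _ t _ n _)) as [F [HF HI]].
    exists F. split; [exact HF|]. apply Rint_of_is_RInt.
    replace (2 * c * _ * _ * F) with ((1 + 1) * (c * sin_integral (half_binom_coef n 0) n 0 t))
      by (rewrite HI; ring).
    apply is_RInt_sym.
    + intros x Hx. rewrite Hodd by exact Hx. replace (- x * t) with (- (x * t)) by ring.
      rewrite sin_neg. ring.
    + apply (is_RInt_ext (fun x => g x * sin (x * t + 0))); [intros; now rewrite Rplus_0_r|].
      now apply is_RInt_mul_sin_integral.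
Qed.

Lemma fourier_q_poly_even n g d t :
  (forall x, 0 < x < 1 -> g x = d * q_poly n x) -> (forall x, 0 < x < 1 -> g (- x) = g x) ->
  exists F, hyp1F2_is (INR (n + 1)) (INR (3 * n + 2) / 2) (INR (3 * n + 3) / 2) (- t ^ 2 / 4) F /\
    Rint (fun x => g x * cos (x * t)) (-1) 1
      (2 * d * t ^ (2 * n) * ((-1) ^ n * INR (fact n) / INR (fact (3 * n + 1))) * F) /\
    Rint (fun x => g x * sin (x * t)) (-1) 1 0.
Proof.
  intros Hg Heven.
  assert (Hgq : forall x, 0 < x < 1 -> g x = d * poly_eval (half_binom_coef n (-1)) n x)
    by (intros; rewrite <- q_poly_half_binom; auto).
  destruct (infinite_sum_factor _ _ _ (infinite_sum_sin_integral_q n t)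
              (hyp1F2_exists_of_scale_0 _ _ _ t _ n _)) as [F [HF HI]].
  exists F. split; [exact HF | split]; apply Rint_of_is_RInt.
  - replace (2 * d * _ * _ * F)
      with ((1 + 1) * (d * sin_integral (half_binom_coef n (-1)) n (PI / 2) t))
      by (rewrite HI; ring).
    apply is_RInt_sym.
    + intros x Hx. rewrite Heven by exact Hx. replace (- x * t) with (- (x * t)) by ring.
      rewrite cos_neg. ring.
    + apply (is_RInt_ext (fun x => g x * sin (x * t + PI / 2))); [intros; now rewrite sin_plus_PI2|].
      now apply is_RInt_mul_sin_integral.
  - replace 0 with ((-1 + 1) * (d * sin_integral (half_binom_coef n (-1)) n 0 t)) by ring.
    apply is_RInt_sym.
    + intros x Hx. rewrite Heven by exact Hx. replace (- x * t) with (- (x * t)) by ring.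
      rewrite sin_neg. ring.
    + apply (is_RInt_ext (fun x => g x * sin (x * t + 0))); [intros; now rewrite Rplus_0_r|].
      now apply is_RInt_mul_sin_integral.
Qed.

Theorem mainTheorem12 (n : nat) (f : nat -> R -> R) :
  alpert (n + 1) f ->
  (forall c : R, (forall x, 0 < x < 1 -> f (n + 1)%nat x = c * p_poly n x) ->
    forall t : R,
      (* real part of the Fourier integral *)
      Rint (fun x => f (n + 1)%nat x * cos (x * t)) (-1) 1 0 /\
      (* imaginary part *)
      exists F : R,
        hyp1F2_is (INR (n + 1)) (INR (3 * n + 3) / 2) (INR (3 * n + 4) / 2) (- t ^ 2 / 4) F /\
        Rint (fun x => f (n + 1)%nat x * sin (x * t)) (-1) 1
          (2 * c * t ^ (2 * n + 1) * ((-1) ^ n * INR (fact n) / INR (fact (3 * n + 2))) * F)) /\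
  ((1 <= n)%nat ->
   forall d : R, (forall x, 0 < x < 1 -> f n x = d * q_poly n x) ->
    forall t : R,
      exists F : R,
        hyp1F2_is (INR (n + 1)) (INR (3 * n + 2) / 2) (INR (3 * n + 3) / 2) (- t ^ 2 / 4) F /\
        Rint (fun x => f n x * cos (x * t)) (-1) 1
          (2 * d * t ^ (2 * n) * ((-1) ^ n * INR (fact n) / INR (fact (3 * n + 1))) * F) /\
        Rint (fun x => f n x * sin (x * t)) (-1) 1 0).
Proof.
  intros [_ [_ [Hpar _]]]. split.
  - intros c Hc t. apply fourier_p_poly_odd; [exact Hc|].
    intros x Hx. rewrite Hpar by (lia || exact Hx).
    replace (n + 1 + (n + 1) - 1)%nat with (S (2 * n)) by lia.
    rewrite pow_1_odd. ring.
  - intros Hn d Hd t. apply fourier_q_poly_even; [exact Hd|].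
    intros x Hx. rewrite Hpar by (lia || exact Hx).
    replace (n + (n + 1) - 1)%nat with (2 * n)%nat by lia.
    rewrite pow_1_even. ring.
Qed.
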